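(* A $*$-ring $R$ is a generalized Rickart $*$-ring if and only if $R$ has a unity element and for each $x\in R$ there exist a projection $e\in R$ and $n\in\mathbb N$ such that $r(x^n)=r(e)$.
   Context: A $*$-ring is an associative ring $R$ with an involution $x\mapsto x^*$ (additive, $(xy)^*=y^*x^*$, $x^{**}=x$). A projection is an element $e$ with $e=e^*=e^2$. For $a\in R$, $r(a)=\{b\in R: ab=0\}$. $R$ is a generalized Rickart $*$-ring if for every $x\in R$ there exist a positive integer $n$ and a projection $g$ with $r(x^n)=gR$. *)

(* A *-ring here is a possibly NON-unital associative ring
   (an additive group with an associative, bi-distributive multiplication)
   equipped with an involution; the existence of a unity is part of the
   theorem's conclusion, so it cannot be built into the structure. *)
From mathcomp Require Import all_boot all_algebra.
Set Implicit Arguments. Unset Strict Implicit. Unset Printing Implicit Defensive.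
Import GRing.Theory.
Local Open Scope ring_scope.

Definition star_rng (R : zmodType) (mul : R -> R -> R) (star : R -> R) : Prop :=
  (forall x y z, mul x (mul y z) = mul (mul x y) z) /\
  (forall x y z, mul x (y + z) = mul x y + mul x z) /\
  (forall x y z, mul (x + y) z = mul x z + mul y z) /\
  (forall x y, star (x + y) = star x + star y) /\
  (forall x y, star (mul x y) = mul (star y) (star x)) /\
  (forall x, star (star x) = x).

(* x ^ n for n >= 1 (the value for n = 0 is irrelevant: it is always
   guarded by 0 < n below): x^n = x * (x * ... x), n factors. *)
Definition rpow (R : zmodType) (mul : R -> R -> R) (x : R) (n : nat) : R :=
  iter n.-1 (mul x) x.

Definition is_projection (R : zmodType) (mul : R -> R -> R) (star : R -> R)
  (e : R) : Prop := e = star e /\ e = mul e e.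

Definition rann (R : zmodType) (mul : R -> R -> R) (a : R) : R -> Prop :=
  fun b => mul a b = 0.

Definition rmulset (R : zmodType) (mul : R -> R -> R) (g : R) : R -> Prop :=
  fun b => exists y, b = mul g y.

Definition set_eq (R : Type) (A B : R -> Prop) : Prop := forall b, A b <-> B b.

Definition gen_rickart (R : zmodType) (mul : R -> R -> R) (star : R -> R) : Prop :=
  forall x : R, exists n : nat, exists g : R,
    (0 < n)%N /\ is_projection mul star g /\
    set_eq (rann mul (rpow mul x n)) (rmulset mul g).

Definition has_unity (R : zmodType) (mul : R -> R -> R) : Prop :=
  exists u : R, forall x, mul u x = x /\ mul x u = x.

From mathcomp Require Import all_boot all_algebra.
Import GRing.Theory.
Local Open Scope ring_scope.
Set Implicit Arguments.
Unset Strict Implicit.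

(* In a *-ring with unity u, a projection g has the complementary projection
   u - g, and gR = r(u - g); since u - (u - g) = g, the two descriptions
   "r(x^n) = gR" and "r(x^n) = r(e)" translate into each other via g = u - e.
   The unity itself comes from x = 0: r(0^n) = R = gR makes g a left unity,
   and applying the involution makes it a two-sided one. *)

Lemma additive0 (U V : zmodType) (f : U -> V) :
  {morph f : x y / x + y} -> f 0 = 0.
Proof. by move=> fD; apply: (addrI (f 0)); rewrite -fD !addr0. Qed.

Lemma additiveN (U V : zmodType) (f : U -> V) :
  {morph f : x y / x + y} -> {morph f : x / - x}.
Proof.
by move=> fD x; apply/eqP; rewrite -addr_eq0 -fD addrC subrr (additive0 fD).
Qed.

Section StarRng.

Variables (R : zmodType) (mul : R -> R -> R) (star : R -> R).
Hypothesis HR : star_rng mul star.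

Let mulA x y z : mul x (mul y z) = mul (mul x y) z := HR.1 x y z.
Let mulDr x : {morph mul x : y z / y + z} := HR.2.1 x.
Let mulDl y : {morph mul^~ y : x z / x + z} := fun x z => HR.2.2.1 x z y.
Let starD : {morph star : x y / x + y} := HR.2.2.2.1.
Let starM x y : star (mul x y) = mul (star y) (star x) := HR.2.2.2.2.1 x y.
Let starK : involutive star := HR.2.2.2.2.2.

Lemma rpow0 n : rpow mul 0 n = 0.
Proof. by rewrite /rpow; elim: n.-1 => //= k ->; apply: additive0 (mulDl 0). Qed.

Lemma left_unity_projection_unity g :
  is_projection mul star g -> (forall y, mul g y = y) ->
  forall y, mul g y = y /\ mul y g = y.
Proof.
by move=> [gs _] gl y; split=> //; rewrite -[mul y g]starK starM -gs gl starK.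
Qed.

Lemma gen_rickart_has_unity : gen_rickart mul star -> has_unity mul.
Proof.
move=> G; have [n [g [_ [Pg Hg]]]] := G 0.
exists g; apply: left_unity_projection_unity => // y.
have [z ->] : rmulset mul g y by apply/Hg; rewrite /rann rpow0 (additive0 (mulDl y)).
by rewrite mulA -Pg.2.
Qed.

Section Unity.

Variable u : R.
Hypothesis unityP : forall x, mul u x = x /\ mul x u = x.

Let mul_unity_l x : mul u x = x. Proof. exact: (unityP x).1. Qed.
Let mul_unity_r x : mul x u = x. Proof. exact: (unityP x).2. Qed.

Lemma star_unity : star u = u.
Proof. by rewrite -{1}[star u]mul_unity_r -{2}[u]starK -starM mul_unity_r starK. Qed.

Lemma projection_complement g :
  is_projection mul star g -> is_projection mul star (u - g).
Proof.
move=> [gs gg]; split; first by rewrite starD (additiveN starD) star_unity -gs.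
rewrite mulDl (additiveN (mulDl _)) !mulDr !(additiveN (mulDr _)).
by rewrite mul_unity_l mul_unity_r mul_unity_l -gg subrr subr0.
Qed.

Lemma rmulset_complement g :
  is_projection mul star g -> set_eq (rmulset mul g) (rann mul (u - g)).
Proof.
move=> [_ gg] b; rewrite /rmulset /rann mulDl (additiveN (mulDl _)) mul_unity_l.
split=> [[y ->] | /eqP]; first by rewrite mulA -gg subrr.
by rewrite subr_eq0 => /eqP ->; exists b.
Qed.

Lemma rann_projection e :
  is_projection mul star e -> set_eq (rann mul e) (rmulset mul (u - e)).
Proof.
move=> Pe b; have := rmulset_complement (projection_complement Pe) b.
by rewrite subKr => eRc; split=> /eRc.
Qed.

End Unity.

End StarRng.

Lemma set_eq_trans (T : Type) (A B C : T -> Prop) :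
  set_eq A B -> set_eq B C -> set_eq A C.
Proof. by move=> AB BC x; split=> [/AB/BC | /BC/AB]. Qed.

Theorem mainTheorem7 (R : zmodType) (mul : R -> R -> R) (star : R -> R)
  (HR : star_rng mul star) :
  gen_rickart mul star <->
  (has_unity mul /\
   forall x : R, exists e : R, exists n : nat,
     is_projection mul star e /\ (0 < n)%N /\
     set_eq (rann mul (rpow mul x n)) (rann mul e)).
Proof.
split=> [G | [[u unityP] H] x].
  have [u unityP] := gen_rickart_has_unity HR G.
  split=> [|x]; first by exists u.
  have [n [g [n_gt0 [Pg Hg]]]] := G x.
  exists (u - g), n; split; first exact: projection_complement.
  by split=> //; apply: set_eq_trans Hg (rmulset_complement HR unityP Pg).
have [e [n [Pe [n_gt0 He]]]] := H x.
exists n, (u - e); split=> //; split; first exact: projection_complement.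
by apply: set_eq_trans He (rann_projection HR unityP Pe).
Qed.
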